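(* Let $m\ge 2$ and let $C_{4m}=v_0v_1\cdots v_{4m-1}v_0$. Let $\mathscr A$ be any partition of $\{v_i: i \text{ even}\}$ into blocks of size $2$ and $\mathscr B$ any partition of $\{v_i : i\text{ odd}\}$ into blocks of size $2$. Let $G_{2m}(\mathscr A,\mathscr B)$ be the (not necessarily simple) $4$-regular graph obtained from $C_{4m}$ by identifying the two vertices of each block of $\mathscr A\cup\mathscr B$ into a single vertex. Then $\chi_{la}(G_{2m}(\mathscr A,\mathscr B))=3$.
   Context: Identifying a set of pairwise nonadjacent vertices means replacing them by one new vertex incident to all edges previously incident to any of them (parallel edges may arise). For a connected (multi)graph $G$ with edge set $E$, $|E|=q$, a local antimagic labeling is a bijection $f:E\to\{1,\dots,q\}$ such that adjacent vertices $x,y$ satisfy $f^+(x)\ne f^+(y)$, where $f^+(x)$ is the sum of the labels of the edges incident to $x$; $\chi_{la}(G)$ is the minimum number of distinct values of $f^+$ over all local antimagic labelings of $G$. *)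

From mathcomp Require Import all_boot.
Set Implicit Arguments. Unset Strict Implicit. Unset Printing Implicit Defensive.

(* A finite multigraph is given by a finite vertex set [Vs] (inside an ambient
   finType [V]), a finite edge type [E], and an endpoint map [ends]. *)

(* f^+(v): sum of labels of edges incident to v (a loop would count twice). *)
Definition vsum (V E : finType) (ends : E -> V * V) (f : E -> nat) (v : V) : nat :=
  \sum_(e : E) f e * (((ends e).1 == v) + ((ends e).2 == v)).

Definition adjacent (V E : finType) (ends : E -> V * V) (x y : V) : bool :=
  [exists e, (ends e == (x, y)) || (ends e == (y, x))].

Definition local_antimagic (V E : finType) (ends : E -> V * V) (f : E -> nat) : Prop :=
  [/\ injective f, (forall e, 0 < f e <= #|E|) &
      (forall x y, adjacent ends x y -> vsum ends f x != vsum ends f y)].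

Definition nvalues (V E : finType) (Vs : {set V}) (ends : E -> V * V) (f : E -> nat) : nat :=
  size (undup [seq vsum ends f v | v <- enum Vs]).

Definition chi_la_is (V E : finType) (Vs : {set V}) (ends : E -> V * V) (k : nat) : Prop :=
  (exists f, local_antimagic ends f /\ nvalues Vs ends f = k) /\
  (forall f, local_antimagic ends f -> k <= nvalues Vs ends f).

(* The cycle C_{4m} on vertices v_i = i : 'I_(4m), edge i joining v_i and v_{i+1 mod 4m}.
   Identifying the vertices of each block of the partition P: the vertices of the
   new multigraph are the blocks of P, edge i joins the block of i and the block of i+1. *)
Definition ident_ends (m : nat) (P : {set {set 'I_(4 * m)}}) (i : 'I_(4 * m))
  : {set 'I_(4 * m)} * {set 'I_(4 * m)} :=
  (pblock P i, pblock P (ordS i)).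

Definition evens (m : nat) : {set 'I_(4 * m)} := [set i : 'I_(4 * m) | ~~ odd i].
Definition odds (m : nat) : {set 'I_(4 * m)} := [set i : 'I_(4 * m) | odd i].

From mathcomp Require Import all_boot zify.
Set Implicit Arguments. Unset Strict Implicit. Unset Printing Implicit Defensive.

(* Every edge of C_{4m} has exactly one even end, so the identified graph is
   bipartite between the m blocks of even vertices and the m blocks of odd
   vertices, and the vertex sums over either side count every label once.
   If a local antimagic labeling had only two vertex sums, they would alternate
   along the cycle: all even blocks would get a and all odd blocks b <> a,
   whence m a = m b, a contradiction.  Conversely, a labeling giving the cycle
   vertices the sums 4m+1 (even), 4m+2 (odd) and 2m+2 (for v_{4m-1}) yields the
   block sums 8m+2, 8m+4 and 6m+4, which are distinct and all attained when
   m >= 2. *)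

Section Cycle.
Variable n : nat.
Implicit Types (f : 'I_n -> nat) (u v w : 'I_n) (C : {set 'I_n}).

Definition cycle_vsum f v := f v + f (ord_pred v).

Lemma ord_pred_val v : nat_of_ord (ord_pred v) = if v == 0 :> nat then n.-1 else v.-1.
Proof.
case: v => [[|v] lt] /=.
  by rewrite add0n modn_small // prednK // (leq_ltn_trans _ lt).
by rewrite modnDr modn_small // ltnW.
Qed.

Lemma odd_ordS v : ~~ odd n -> odd (ordS v) = ~~ odd v.
Proof. by move=> /negPf n_even; rewrite /= odd_mod. Qed.

Lemma sum_cycle_vsum f C :
  \sum_(v in C) cycle_vsum f v = \sum_v f v * ((v \in C) + (ordS v \in C)).
Proof.
rewrite big_split /=; under [RHS]eq_bigr do rewrite mulnDr.
rewrite [RHS]big_split /=; congr (_ + _); rewrite big_mkcond.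
  by apply: eq_bigr => v _; case: (v \in C); rewrite ?muln1 ?muln0.
rewrite (reindex_inj (@ordS_inj _)) /=; apply: eq_bigr => v _.
by rewrite ordSK; case: (ordS v \in C); rewrite ?muln1 ?muln0.
Qed.

Section Transversal.
Variable C : {set 'I_n}.
Hypothesis transC : forall v, (v \in C) != (ordS v \in C).

Lemma sum_cycle_vsum_transversal f : \sum_(v in C) cycle_vsum f v = \sum_v f v.
Proof.
rewrite sum_cycle_vsum; apply: eq_bigr => v _.
by move: (transC v); case: (v \in C); case: (ordS v \in C); rewrite ?muln1.
Qed.

Lemma card_pairs_transversal (Q : {set {set 'I_n}}) :
  partition Q C -> {in Q, forall X : {set 'I_n}, #|X| = 2} -> #|Q| * 4 = n.
Proof.
move=> partQ cardQ; have := sum_cycle_vsum_transversal (fun=> 1).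
rewrite !sum_nat_const card_ord muln1 (card_partition partQ).
by rewrite (eq_bigr (fun=> 2) cardQ) sum_nat_const; lia.
Qed.

End Transversal.

Lemma ordS_alternating (p : pred 'I_n) :
  (forall v, p (ordS v) = ~~ p v) -> forall v w, odd v = odd w -> p v = p w.
Proof.
move=> pS v w; have n_gt0 : 0 < n := leq_ltn_trans (leq0n v) (ltn_ord v).
suff pE u : p u = p (Ordinal n_gt0) (+) odd u by rewrite (pE v) (pE w) => ->.
case: u => k; elim: k => [|k IH] lt_k.
  by rewrite addbF; congr p; apply: val_inj.
have -> : Ordinal lt_k = ordS (Ordinal (ltnW lt_k)).
  by apply: val_inj; rewrite /= modn_small.
by rewrite pS IH /= modn_small // addbN.
Qed.

Lemma ordS_two_valued (T : eqType) (c : 'I_n -> T) :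
  (forall v, c v != c (ordS v)) ->
  (forall u v w, [|| c u == c v, c v == c w | c u == c w]) ->
  forall v w, odd v = odd w -> c v = c w.
Proof.
move=> cS c2 v w vw; apply/esym/eqP.
rewrite (@ordS_alternating (fun u => c u == c v) _ w v) ?eqxx // => u /=.
case: (eqVneq (c u) (c v)) => [<-|cuv]; first by rewrite eq_sym (negPf (cS u)).
by move: (c2 u (ordS u) v); rewrite (negPf (cS u)) (negPf cuv) orbF.
Qed.

End Cycle.

Lemma odd_ordS_4m m (v : 'I_(4 * m)) : odd (ordS v) = ~~ odd v.
Proof. by rewrite odd_ordS // oddM. Qed.

Lemma evens_transversal m (v : 'I_(4 * m)) : (v \in evens m) != (ordS v \in evens m).
Proof. by rewrite !inE odd_ordS_4m negbK; case: odd. Qed.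

Lemma odds_transversal m (v : 'I_(4 * m)) : (v \in odds m) != (ordS v \in odds m).
Proof. by rewrite !inE odd_ordS_4m; case: odd. Qed.

Section Values.
Variables (V E : finType) (Vs : {set V}) (ends : E -> V * V) (f : E -> nat).

Lemma nvalues_ge3 x y z : x \in Vs -> y \in Vs -> z \in Vs ->
  uniq [:: vsum ends f x; vsum ends f y; vsum ends f z] -> 3 <= nvalues Vs ends f.
Proof.
move=> xV yV zV uniq_xyz; apply: (uniq_leq_size uniq_xyz) => k.
by rewrite !inE mem_undup => /or3P[]/eqP->; apply: map_f; rewrite mem_enum.
Qed.

Lemma nvalues_eq (s : seq nat) :
  uniq s -> [seq vsum ends f v | v <- enum Vs] =i s -> nvalues Vs ends f = size s.
Proof.
move=> uniq_s values_s; apply/perm_size/uniq_perm; rewrite ?undup_uniq //.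
by move=> k; rewrite mem_undup.
Qed.

End Values.

Section BlockGraph.
Variables (m : nat) (P : {set {set 'I_(4 * m)}}).
Local Notation ends := (ident_ends P).

Lemma ident_ends_properP f :
  (forall x y, adjacent ends x y -> vsum ends f x != vsum ends f y) <->
  (forall v, vsum ends f (pblock P v) != vsum ends f (pblock P (ordS v))).
Proof.
split=> [proper v | proper x y /existsP[v /orP[]/eqP[<- <-]] //].
  by apply: proper; apply/existsP; exists v; rewrite eqxx.
by rewrite eq_sym.
Qed.

Hypothesis partP : partition P [set: 'I_(4 * m)].

Lemma in_pblock v : v \in pblock P v.
Proof. by rewrite mem_pblock (cover_partition partP) inE. Qed.

Lemma pblock_eq X v : X \in P -> (pblock P v == X) = (v \in X).
Proof.
move=> XP; apply/eqP/idP => [<-|]; first exact: in_pblock.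
exact: def_pblock (partition_trivIset partP) XP.
Qed.

Lemma pblock_sub (Q : {set {set 'I_(4 * m)}}) v :
  Q \subset P -> v \in cover Q -> pblock P v \in Q.
Proof.
move=> QP /bigcupP[X XQ vX].
by rewrite (def_pblock (partition_trivIset partP) (subsetP QP X XQ) vX).
Qed.

Lemma pblock_block v : pblock P v \in P.
Proof. by apply: pblock_sub; rewrite ?subxx // (cover_partition partP) inE. Qed.

Lemma block_pblock X : X \in P -> exists2 v, v \in X & pblock P v = X.
Proof.
move=> XP; have /set0Pn[v vX] := partition_neq0 partP XP.
by exists v => //; apply/eqP; rewrite pblock_eq.
Qed.

Lemma vsum_ident_ends f X : X \in P -> vsum ends f X = \sum_(v in X) cycle_vsum f v.
Proof.
by move=> XP; rewrite sum_cycle_vsum; apply: eq_bigr => v _; rewrite !pblock_eq.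
Qed.

Lemma sum_vsum_blocks f (Q : {set {set 'I_(4 * m)}}) :
  Q \subset P -> \sum_(X in Q) vsum ends f X = \sum_(v in cover Q) cycle_vsum f v.
Proof.
move=> QP; rewrite big_trivIset; last exact: trivIsetS QP (partition_trivIset partP).
by apply: eq_bigr => X XQ; rewrite vsum_ident_ends // (subsetP QP).
Qed.

End BlockGraph.

Section Identification.
Variables (m : nat) (A B : {set {set 'I_(4 * m)}}).
Hypothesis m_ge2 : 2 <= m.
Hypothesis partA : partition A (evens m).
Hypothesis cardA : {in A, forall X : {set 'I_(4 * m)}, #|X| = 2}.
Hypothesis partB : partition B (odds m).
Hypothesis cardB : {in B, forall X : {set 'I_(4 * m)}, #|X| = 2}.
Local Notation P := (A :|: B).
Local Notation ends := (ident_ends P).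

Lemma partition_blocks : partition P [set: 'I_(4 * m)].
Proof.
apply/and3P; split.
- rewrite /cover bigcup_setU -!/(cover _) (cover_partition partA) (cover_partition partB).
  by apply/eqP/setP => v; rewrite !inE; case: odd.
- apply: trivIsetU; rewrite ?(partition_trivIset partA) ?(partition_trivIset partB) //.
  rewrite (cover_partition partA) (cover_partition partB).
  by rewrite disjoints_subset; apply/subsetP => v; rewrite !inE.
- by rewrite inE (partition0 partA) (partition0 partB).
Qed.

Lemma card_A : #|A| = m.
Proof. by have := card_pairs_transversal (@evens_transversal m) partA cardA; lia. Qed.

Lemma card_B : #|B| = m.
Proof. by have := card_pairs_transversal (@odds_transversal m) partB cardB; lia. Qed.

Lemma pblock_even (v : 'I_(4 * m)) : ~~ odd v -> pblock P v \in A.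
Proof.
move=> v_even; apply: (pblock_sub partition_blocks); first exact: subsetUl.
by rewrite (cover_partition partA) inE.
Qed.

Lemma pblock_odd (v : 'I_(4 * m)) : odd v -> pblock P v \in B.
Proof.
move=> v_odd; apply: (pblock_sub partition_blocks); first exact: subsetUr.
by rewrite (cover_partition partB) inE.
Qed.

Lemma sum_vsum_A f : \sum_(X in A) vsum ends f X = \sum_i f i.
Proof.
rewrite (sum_vsum_blocks partition_blocks) ?subsetUl // (cover_partition partA).
exact/sum_cycle_vsum_transversal/evens_transversal.
Qed.

Lemma sum_vsum_B f : \sum_(X in B) vsum ends f X = \sum_i f i.
Proof.
rewrite (sum_vsum_blocks partition_blocks) ?subsetUr // (cover_partition partB).
exact/sum_cycle_vsum_transversal/odds_transversal.
Qed.

Fact cycle_gt0 : 0 < 4 * m. Proof. lia. Qed.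
Let vfirst : 'I_(4 * m) := Ordinal cycle_gt0.
Let vlast : 'I_(4 * m) := ord_pred vfirst.

Lemma vlast_val : nat_of_ord vlast = (4 * m).-1.
Proof. by rewrite ord_pred_val. Qed.

Lemma vlast_odd : odd vlast.
Proof. by rewrite vlast_val; lia. Qed.

Lemma local_antimagic_nvalues_ge3 f : local_antimagic ends f -> 3 <= nvalues P ends f.
Proof.
case=> _ _ /ident_ends_properP proper.
pose S v := vsum ends f (pblock P v).
rewrite leqNgt; apply/negP => few.
have two_valued u v w : [|| S u == S v, S v == S w | S u == S w].
  apply: contraLR few => distinct; rewrite -leqNgt.
  have blockP := pblock_block partition_blocks.
  apply: (nvalues_ge3 (blockP u) (blockP v) (blockP w)).
  by move: distinct; rewrite /= !inE; case: (S u == S v); case: (S v == S w); case: (S u == S w).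
have S_parity := ordS_two_valued proper two_valued.
have block_value X (v : 'I_(4 * m)) :
    X \in P -> {in X, forall u : 'I_(4 * m), odd u = odd v} -> vsum ends f X = S v.
  by move=> XP Xv; have [u uX <-] := block_pblock partition_blocks XP; apply/S_parity/Xv.
have sumA : \sum_(X in A) vsum ends f X = #|A| * S vfirst.
  rewrite -sum_nat_const; apply: eq_bigr => X XA.
  apply: block_value => [|u /(subsetP (partitionS partA XA))]; first by rewrite inE XA.
  by rewrite inE => /negPf.
have sumB : \sum_(X in B) vsum ends f X = #|B| * S (ordS vfirst).
  rewrite -sum_nat_const; apply: eq_bigr => X XB.
  apply: block_value => [|u /(subsetP (partitionS partB XB))]; first by rewrite inE XB orbT.
  by rewrite inE odd_ordS_4m => ->.
have : #|A| * S vfirst = #|B| * S (ordS vfirst).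
  by rewrite -sumA -sumB sum_vsum_A sum_vsum_B.
rewrite card_A card_B => /eqP; rewrite eqn_pmul2l; last lia.
exact/negP/proper.
Qed.

Definition label (i : 'I_(4 * m)) : nat :=
  if odd i then (if i.+1 == 4 * m then 2 * m + 1 else 2 * m + 2 + i./2) else 2 * m - i./2.

Lemma label_inj : injective label.
Proof.
move=> i j; rewrite /label => eq_ij; apply: val_inj => /=.
have := ltn_ord i; have := ltn_ord j.
move: (nat_of_ord i) (nat_of_ord j) eq_ij => x y.
by do ![case: ifP] => *; lia.
Qed.

Lemma label_range e : 0 < label e <= #|'I_(4 * m)|.
Proof.
rewrite card_ord /label; have := ltn_ord e; move: (nat_of_ord e) => x.
by do ![case: ifP] => *; lia.
Qed.

Lemma cycle_vsum_label v : cycle_vsum label v =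
  if odd v then (if v.+1 == 4 * m then 2 * m + 2 else 4 * m + 2) else 4 * m + 1.
Proof.
rewrite /cycle_vsum /label ord_pred_val; have := ltn_ord v.
move: (nat_of_ord v) => x.
by do ![case: ifP] => *; lia.
Qed.

Lemma vsum_label_A X : X \in A -> vsum ends label X = 8 * m + 2.
Proof.
move=> XA; rewrite (vsum_ident_ends partition_blocks) ?inE ?XA //.
rewrite (eq_bigr (fun=> 4 * m + 1)) => [|v /(subsetP (partitionS partA XA))].
  by rewrite sum_nat_const cardA //; lia.
by rewrite cycle_vsum_label inE => /negPf->.
Qed.

Lemma vsum_label_B X :
  X \in B -> vsum ends label X = if vlast \in X then 6 * m + 4 else 8 * m + 4.
Proof.
move=> XB.
have inner v : v \in X -> v != vlast -> cycle_vsum label v = 4 * m + 2.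
  move=> /(subsetP (partitionS partB XB)); rewrite inE => v_odd v_last.
  rewrite cycle_vsum_label v_odd ifF //; apply: contraNF v_last => /eqP v_last.
  by apply/eqP/ord_inj; rewrite vlast_val; lia.
rewrite (vsum_ident_ends partition_blocks) ?inE ?XB ?orbT //.
case: ifP => lastX.
  rewrite (big_setD1 vlast) //= (eq_bigr (fun=> 4 * m + 2)) => [|v /setD1P[]]; last first.
    by move=> v_last /inner; apply.
  rewrite sum_nat_const; have := cardsD1 vlast X; rewrite lastX cardB //.
  rewrite cycle_vsum_label vlast_val; do ![case: ifP] => *; lia.
rewrite (eq_bigr (fun=> 4 * m + 2)) => [|v vX]; last first.
  by apply: inner => //; apply: contraFneq lastX => <-.
by rewrite sum_nat_const cardB //; lia.
Qed.

Lemma label_local_antimagic : local_antimagic ends label.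
Proof.
split; [exact: label_inj | exact: label_range | apply/ident_ends_properP => v].
have S_even (u : 'I_(4 * m)) : ~~ odd u -> vsum ends label (pblock P u) = 8 * m + 2.
  by move/pblock_even; apply: vsum_label_A.
have S_odd (u : 'I_(4 * m)) : odd u -> vsum ends label (pblock P u) != 8 * m + 2.
  by move/pblock_odd/vsum_label_B->; case: ifP => _; apply/eqP; lia.
case: (boolP (odd v)) => v_odd.
  by rewrite (S_even (ordS v)) ?odd_ordS_4m ?v_odd //; apply: S_odd.
by rewrite S_even // eq_sym; apply: S_odd; rewrite odd_ordS_4m.
Qed.

Lemma nvalues_label : nvalues P ends label = 3.
Proof.
apply: (@nvalues_eq _ _ _ _ _ [:: 8 * m + 2; 8 * m + 4; 6 * m + 4]).
  by rewrite /= !inE; do ![case: eqP => /=]; lia.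
move=> k; apply/mapP/idP => [[X] | ].
  rewrite mem_enum => /setUP[XA|XB] ->.
    by rewrite vsum_label_A // inE eqxx.
  by rewrite vsum_label_B //; case: ifP; rewrite !inE eqxx ?orbT.
rewrite !inE => /or3P[]/eqP->.
- have /set0Pn[X XA] : A != set0 by rewrite -card_gt0 card_A; lia.
  by exists X; rewrite ?mem_enum ?inE ?XA ?vsum_label_A.
- have /set0Pn[X /setD1P[X_last XB]] : B :\ pblock P vlast != set0.
    rewrite -card_gt0; have := cardsD1 (pblock P vlast) B.
    by rewrite card_B pblock_odd ?vlast_odd //= add1n => m_eq; rewrite -ltnS -m_eq.
  exists X; rewrite ?mem_enum ?inE ?XB ?orbT // vsum_label_B // ifF //.
  by apply: negbTE; rewrite -(pblock_eq partition_blocks) ?inE ?XB ?orbT // eq_sym.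
- exists (pblock P vlast); first by rewrite mem_enum pblock_block ?partition_blocks.
  by rewrite vsum_label_B ?in_pblock ?partition_blocks ?pblock_odd ?vlast_odd.
Qed.

End Identification.

Theorem mainTheorem9 (m : nat) (A B : {set {set 'I_(4 * m)}}) :
  2 <= m ->
  partition A (evens m) -> {in A, forall X : {set 'I_(4 * m)}, #|X| = 2} ->
  partition B (odds m) -> {in B, forall X : {set 'I_(4 * m)}, #|X| = 2} ->
  chi_la_is (A :|: B) (ident_ends (A :|: B)) 3.
Proof.
move=> m_ge2 partA cardA partB cardB; split.
  by exists (@label m); split; [exact: label_local_antimagic | exact: nvalues_label].
exact: local_antimagic_nvalues_ge3.
Qed.
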